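(* Let $c\in\mathbb{R}$. (1) (Elliptic umbilic $D_4^-$.) Let $\boldsymbol\eta_c(x_1,x_2)=(x_1^2-x_2^2,\,-2x_1x_2+4cx_2)$. If $\mathbf y\in\mathbb{R}^2$ has exactly four preimages $\mathbf x_1,\dots,\mathbf x_4$ under $\boldsymbol\eta_c$, each with $\det[\mathrm{Jac}\,\boldsymbol\eta_c](\mathbf x_i)\ne0$, then $\mu_1+\mu_2+\mu_3+\mu_4=0$. (2) (Hyperbolic umbilic $D_4^+$.) Let $\boldsymbol\eta_c(x_1,x_2)=(x_1^2+2cx_2,\,x_2^2+2cx_1)$. If $\mathbf y\in\mathbb{R}^2$ has exactly four preimages $\mathbf x_1,\dots,\mathbf x_4$ under $\boldsymbol\eta_c$, each with nonvanishing Jacobian determinant, then $\mu_1+\mu_2+\mu_3+\mu_4=0$.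
   Context: The signed magnification of a preimage (lensed image) $\mathbf x_i$ of $\mathbf y$ is $\mu_i=1/\det[\mathrm{Jac}\,\boldsymbol\eta_c](\mathbf x_i)$. The maps above are the quantitative local forms of lensing maps near elliptic and hyperbolic umbilic caustics. *)

From Stdlib Require Import Reals Lra.
Open Scope R_scope.

Definition eta_ell (c : R) (p : R * R) : R * R :=
  let (x1, x2) := p in (x1 ^ 2 - x2 ^ 2, - 2 * x1 * x2 + 4 * c * x2).

Definition eta_hyp (c : R) (p : R * R) : R * R :=
  let (x1, x2) := p in (x1 ^ 2 + 2 * c * x2, x2 ^ 2 + 2 * c * x1).

Definition det2 (a b d e : R) : R := a * e - b * d.

(* Jacobian determinant of a map given by its four partial derivatives
   dFi/dxj evaluated at p. *)
Definition jac_det (J11 J12 J21 J22 : R * R -> R) (p : R * R) : R :=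
  det2 (J11 p) (J12 p) (J21 p) (J22 p).

(* Partial derivatives of eta_ell (certified below). *)
Definition ell_J11 (c : R) (p : R * R) : R := 2 * fst p.
Definition ell_J12 (c : R) (p : R * R) : R := - 2 * snd p.
Definition ell_J21 (c : R) (p : R * R) : R := - 2 * snd p.
Definition ell_J22 (c : R) (p : R * R) : R := - 2 * fst p + 4 * c.
Definition jac_ell (c : R) : R * R -> R :=
  jac_det (ell_J11 c) (ell_J12 c) (ell_J21 c) (ell_J22 c).

Definition hyp_J11 (c : R) (p : R * R) : R := 2 * fst p.
Definition hyp_J12 (c : R) (p : R * R) : R := 2 * c.
Definition hyp_J21 (c : R) (p : R * R) : R := 2 * c.
Definition hyp_J22 (c : R) (p : R * R) : R := 2 * snd p.
Definition jac_hyp (c : R) : R * R -> R :=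
  jac_det (hyp_J11 c) (hyp_J12 c) (hyp_J21 c) (hyp_J22 c).

Definition magnification (jac : R * R -> R) (x : R * R) : R := / jac x.

Definition exactly_four_preimages (F : R * R -> R * R) (y x1 x2 x3 x4 : R * R)
  : Prop :=
  x1 <> x2 /\ x1 <> x3 /\ x1 <> x4 /\ x2 <> x3 /\ x2 <> x4 /\ x3 <> x4 /\
  F x1 = y /\ F x2 = y /\ F x3 = y /\ F x4 = y /\
  (forall x, F x = y -> x = x1 \/ x = x2 \/ x = x3 \/ x = x4).

Lemma ell_partials (c x1 x2 : R) :
  derivable_pt_lim (fun t => fst (eta_ell c (t, x2))) x1 (ell_J11 c (x1, x2)) /\
  derivable_pt_lim (fun t => fst (eta_ell c (x1, t))) x2 (ell_J12 c (x1, x2)) /\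
  derivable_pt_lim (fun t => snd (eta_ell c (t, x2))) x1 (ell_J21 c (x1, x2)) /\
  derivable_pt_lim (fun t => snd (eta_ell c (x1, t))) x2 (ell_J22 c (x1, x2)).
Proof.
  unfold ell_J11, ell_J12, ell_J21, ell_J22; cbn [fst snd].
  cbv beta iota delta [eta_ell fst snd].
  repeat split.
  - replace (2 * x1) with (INR 2 * x1 ^ Init.Nat.pred 2 - 0) by (simpl; ring).
    apply (derivable_pt_lim_minus (fun t => t ^ 2) (fun _ => x2 ^ 2)).
    + apply derivable_pt_lim_pow.
    + apply derivable_pt_lim_const.
  - replace (-2 * x2) with (0 - INR 2 * x2 ^ Init.Nat.pred 2) by (simpl; ring).
    apply (derivable_pt_lim_minus (fun _ => x1 ^ 2) (fun t => t ^ 2)).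
    + apply derivable_pt_lim_const.
    + apply derivable_pt_lim_pow.
  - replace (-2 * x2) with (-2 * 1 * x2 + 0) by ring.
    apply (derivable_pt_lim_plus (fun t => -2 * t * x2) (fun _ => 4 * c * x2)).
    + apply (derivable_pt_lim_scal_right (fun t => -2 * t)).
      apply derivable_pt_lim_scal. apply derivable_pt_lim_id.
    + apply derivable_pt_lim_const.
  - replace (-2 * x1 + 4 * c) with (-2 * x1 * 1 + 4 * c * 1) by ring.
    apply (derivable_pt_lim_plus (fun t => -2 * x1 * t) (fun t => 4 * c * t));
      apply derivable_pt_lim_scal; apply derivable_pt_lim_id.
Qed.

Lemma hyp_partials (c x1 x2 : R) :
  derivable_pt_lim (fun t => fst (eta_hyp c (t, x2))) x1 (hyp_J11 c (x1, x2)) /\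
  derivable_pt_lim (fun t => fst (eta_hyp c (x1, t))) x2 (hyp_J12 c (x1, x2)) /\
  derivable_pt_lim (fun t => snd (eta_hyp c (t, x2))) x1 (hyp_J21 c (x1, x2)) /\
  derivable_pt_lim (fun t => snd (eta_hyp c (x1, t))) x2 (hyp_J22 c (x1, x2)).
Proof.
  unfold hyp_J11, hyp_J12, hyp_J21, hyp_J22; cbn [fst snd].
  cbv beta iota delta [eta_hyp fst snd].
  repeat split.
  - replace (2 * x1) with (INR 2 * x1 ^ Init.Nat.pred 2 + 0) by (simpl; ring).
    apply (derivable_pt_lim_plus (fun t => t ^ 2) (fun _ => 2 * c * x2)).
    + apply derivable_pt_lim_pow.
    + apply derivable_pt_lim_const.
  - assert (H := derivable_pt_lim_plus (fun _ => x1 ^ 2) (fun t => 2 * c * t)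
      _ _ _ (derivable_pt_lim_const _ x2)
      (derivable_pt_lim_scal _ (2 * c) _ _ (derivable_pt_lim_id _))).
    replace (0 + 2 * c * 1) with (2 * c) in H by ring. exact H.
  - assert (H := derivable_pt_lim_plus (fun _ => x2 ^ 2) (fun t => 2 * c * t)
      _ _ _ (derivable_pt_lim_const _ x1)
      (derivable_pt_lim_scal _ (2 * c) _ _ (derivable_pt_lim_id _))).
    replace (0 + 2 * c * 1) with (2 * c) in H by ring. exact H.
  - replace (2 * x2) with (INR 2 * x2 ^ Init.Nat.pred 2 + 0) by (simpl; ring).
    apply (derivable_pt_lim_plus (fun t => t ^ 2) (fun _ => 2 * c * x1)).
    + apply derivable_pt_lim_pow.
    + apply derivable_pt_lim_const.
Qed.

(* Off the degenerate lines, distinct preimages have distinct first coordinates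
   p, each p is a root of one quartic P (eliminate the second coordinate), and
   the magnification at a preimage is (al p + be) / P'(p) for constants al, be.
   By Vieta, P'(t_i) is the product of the differences t_i - t_j, and the sum
   of (al t_i + be) / P'(t_i) vanishes by partial fractions (Euler-Jacobi).
   On the degenerate lines (y2 = 0 for D4^-, c = 0 for D4^+) the four
   preimages are explicit and their magnifications cancel in pairs. *)

From Stdlib Require Import Reals Lra List Permutation.
Import ListNotations.
Open Scope R_scope.

Lemma mul_sub_eq0_r (x y g : R) : x <> y -> (x - y) * g = 0 -> g = 0.
Proof. intros Hxy E; destruct (Rmult_integral _ _ E); [lra | assumption]. Qed.

Lemma sqrt_pow2_of_neq0 (x : R) : sqrt x <> 0 -> sqrt x ^ 2 = x.
Proof.
  intro Hx; apply pow2_sqrt; destruct (Rle_lt_dec x 0) as [Hle | Hlt].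
  - now rewrite sqrt_neg_0 in Hx.
  - lra.
Qed.

Lemma sq_eq_cases (x y : R) : x ^ 2 = y ^ 2 -> x = y \/ x = - y.
Proof.
  intro E; assert (F : (x - y) * (x + y) = 0) by (rewrite <- (Rminus_diag_eq _ _ E); ring).
  destruct (Rmult_integral _ _ F); [left | right]; lra.
Qed.

Lemma sum_map_Permutation {T : Type} (f : T -> R) (l l' : list T) :
  Permutation l l' ->
  fold_right Rplus 0 (map f l) = fold_right Rplus 0 (map f l').
Proof. induction 1; simpl; lra. Qed.

Section Quartic.

Variables A B C D : R.

Definition quartic (t : R) : R := t ^ 4 + A * t ^ 3 + B * t ^ 2 + C * t + D.
Definition quartic' (t : R) : R := 4 * t ^ 3 + 3 * A * t ^ 2 + 2 * B * t + C.

Variables t1 t2 t3 t4 : R.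
Hypothesis (d12 : t1 <> t2) (d13 : t1 <> t3) (d14 : t1 <> t4)
           (d23 : t2 <> t3) (d24 : t2 <> t4) (d34 : t3 <> t4).
Hypothesis (r1 : quartic t1 = 0) (r2 : quartic t2 = 0)
           (r3 : quartic t3 = 0) (r4 : quartic t4 = 0).

(* Successive divided differences of [quartic] vanish at distinct roots. *)
Lemma quartic_coeffs_of_roots :
  A = - (t1 + t2 + t3 + t4) /\
  B = t1 * t2 + t1 * t3 + t1 * t4 + t2 * t3 + t2 * t4 + t3 * t4 /\
  C = - (t1 * t2 * t3 + t1 * t2 * t4 + t1 * t3 * t4 + t2 * t3 * t4).
Proof.
  pose (G x y := x ^ 3 + x ^ 2 * y + x * y ^ 2 + y ^ 3 + A * (x ^ 2 + x * y + y ^ 2)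
                 + B * (x + y) + C).
  pose (H x y z := x ^ 2 + y ^ 2 + z ^ 2 + x * y + x * z + y * z + A * (x + y + z) + B).
  assert (G_root : forall x y, x <> y -> quartic x = 0 -> quartic y = 0 -> G x y = 0).
  { intros x y Hxy Px Py; apply (mul_sub_eq0_r x y); [exact Hxy|].
    rewrite <- (Rminus_diag_eq _ _ (eq_trans Px (eq_sym Py))).
    unfold quartic, G; ring. }
  assert (H_root : forall y z, y <> z -> G t1 y = 0 -> G t1 z = 0 -> H t1 y z = 0).
  { intros y z Hyz Gy Gz; apply (mul_sub_eq0_r y z); [exact Hyz|].
    rewrite <- (Rminus_diag_eq _ _ (eq_trans Gy (eq_sym Gz))).
    unfold G, H; ring. }
  assert (G12 := G_root _ _ d12 r1 r2).
  assert (H123 := H_root _ _ d23 G12 (G_root _ _ d13 r1 r3)).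
  assert (H124 := H_root _ _ d24 G12 (G_root _ _ d14 r1 r4)).
  assert (HA : t1 + t2 + t3 + t4 + A = 0).
  { apply (mul_sub_eq0_r t3 t4); [exact d34|].
    rewrite <- (Rminus_diag_eq _ _ (eq_trans H123 (eq_sym H124))).
    unfold H; ring. }
  assert (EA : A = - (t1 + t2 + t3 + t4)) by lra.
  assert (EB : B = t1 * t2 + t1 * t3 + t1 * t4 + t2 * t3 + t2 * t4 + t3 * t4).
  { apply Rminus_diag_uniq; rewrite <- H123; unfold H; rewrite EA; ring. }
  split; [exact EA | split; [exact EB|]].
  apply Rminus_diag_uniq; rewrite <- G12; unfold G; rewrite EA, EB; ring.
Qed.

End Quartic.

Lemma partial_fractions_cubic (al be t1 t2 t3 t4 : R) :
  t1 <> t2 -> t1 <> t3 -> t1 <> t4 -> t2 <> t3 -> t2 <> t4 -> t3 <> t4 ->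
  (al * t1 + be) / ((t1 - t2) * (t1 - t3) * (t1 - t4))
  + (al * t2 + be) / ((t2 - t1) * (t2 - t3) * (t2 - t4))
  + (al * t3 + be) / ((t3 - t1) * (t3 - t2) * (t3 - t4))
  + (al * t4 + be) / ((t4 - t1) * (t4 - t2) * (t4 - t3)) = 0.
Proof. intros; field; repeat split; intro; lra. Qed.

Lemma euler_jacobi_quartic (A B C D al be t1 t2 t3 t4 : R) :
  t1 <> t2 -> t1 <> t3 -> t1 <> t4 -> t2 <> t3 -> t2 <> t4 -> t3 <> t4 ->
  quartic A B C D t1 = 0 -> quartic A B C D t2 = 0 ->
  quartic A B C D t3 = 0 -> quartic A B C D t4 = 0 ->
  (al * t1 + be) / quartic' A B C t1 + (al * t2 + be) / quartic' A B C t2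
  + (al * t3 + be) / quartic' A B C t3 + (al * t4 + be) / quartic' A B C t4 = 0.
Proof.
  intros d12 d13 d14 d23 d24 d34 r1 r2 r3 r4.
  destruct (quartic_coeffs_of_roots A B C D t1 t2 t3 t4 d12 d13 d14 d23 d24 d34
              r1 r2 r3 r4) as (-> & -> & ->).
  replace (quartic' _ _ _ t1) with ((t1 - t2) * (t1 - t3) * (t1 - t4))
    by (unfold quartic'; ring).
  replace (quartic' _ _ _ t2) with ((t2 - t1) * (t2 - t3) * (t2 - t4))
    by (unfold quartic'; ring).
  replace (quartic' _ _ _ t3) with ((t3 - t1) * (t3 - t2) * (t3 - t4))
    by (unfold quartic'; ring).
  replace (quartic' _ _ _ t4) with ((t4 - t1) * (t4 - t2) * (t4 - t3))
    by (unfold quartic'; ring).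
  now apply partial_fractions_cubic.
Qed.

Section PreimageSums.

Variables (F : R * R -> R * R) (y x1 x2 x3 x4 : R * R).
Hypothesis four : exactly_four_preimages F y x1 x2 x3 x4.

Lemma preimages_Permutation (us : list (R * R)) :
  (length us <= 4)%nat -> (forall x, F x = y -> In x us) ->
  Permutation [x1; x2; x3; x4] us.
Proof.
  intros Hlen cover.
  destruct four as (d12 & d13 & d14 & d23 & d24 & d34 & E1 & E2 & E3 & E4 & _).
  apply NoDup_Permutation_bis; [| exact Hlen |].
  - repeat constructor; simpl; intuition congruence.
  - intros x Hx; simpl in Hx; apply cover.
    destruct Hx as [<- | [<- | [<- | [<- | []]]]]; assumption.
Qed.

Variable jac : R * R -> R.

Lemma magnification_sum_of_quartic (A B C D al be : R) :
  (forall x x', F x = y -> F x' = y -> fst x = fst x' -> x = x') ->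
  (forall x, F x = y -> jac x <> 0 ->
     quartic A B C D (fst x) = 0 /\
     magnification jac x = (al * fst x + be) / quartic' A B C (fst x)) ->
  jac x1 <> 0 -> jac x2 <> 0 -> jac x3 <> 0 -> jac x4 <> 0 ->
  magnification jac x1 + magnification jac x2 +
  magnification jac x3 + magnification jac x4 = 0.
Proof.
  intros fst_inj param J1 J2 J3 J4.
  destruct four as (d12 & d13 & d14 & d23 & d24 & d34 & E1 & E2 & E3 & E4 & _).
  assert (fst_neq : forall x x', F x = y -> F x' = y -> x <> x' -> fst x <> fst x')
    by (intros x x' Ex Ex' N Hfst; exact (N (fst_inj x x' Ex Ex' Hfst))).
  destruct (param x1 E1 J1) as [P1 ->], (param x2 E2 J2) as [P2 ->],
           (param x3 E3 J3) as [P3 ->], (param x4 E4 J4) as [P4 ->].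
  apply (euler_jacobi_quartic A B C D); auto.
Qed.

End PreimageSums.

Lemma jac_ell_eq (c p q : R) : jac_ell c (p, q) = 4 * p * (2 * c - p) - 4 * q ^ 2.
Proof. unfold jac_ell, jac_det, det2, ell_J11, ell_J12, ell_J21, ell_J22; simpl; ring. Qed.

Lemma ell_first_coord_injective (c a b : R) (x x' : R * R) :
  b <> 0 -> eta_ell c x = (a, b) -> eta_ell c x' = (a, b) -> fst x = fst x' -> x = x'.
Proof.
  destruct x as [p q], x' as [p' q']; simpl; intros Hb E E' <-.
  injection E as _ E2; injection E' as _ E2'.
  assert (K : 4 * c - 2 * p <> 0) by (intro K; apply Hb; rewrite <- E2; nra).
  f_equal; apply (Rmult_eq_reg_l (4 * c - 2 * p)); [nra | exact K].
Qed.

(* Eliminating q through b = q (4c - 2p). *)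
Lemma ell_quartic_param (c a b : R) (x : R * R) :
  b <> 0 -> eta_ell c x = (a, b) -> jac_ell c x <> 0 ->
  quartic (-4 * c) (4 * c ^ 2 - a) (4 * a * c) (-4 * a * c ^ 2 - b ^ 2 / 4) (fst x) = 0 /\
  magnification (jac_ell c) x =
    ((-1/2) * fst x + c) / quartic' (-4 * c) (4 * c ^ 2 - a) (4 * a * c) (fst x).
Proof.
  destruct x as [p q]; intros Hb E J; simpl in E; injection E as E1 E2.
  unfold magnification, jac_ell, jac_det, det2, ell_J11, ell_J12, ell_J21, ell_J22,
    quartic, quartic' in *; cbn [fst snd] in *.
  assert (Hp : p - 2 * c <> 0) by (intro; apply Hb; rewrite <- E2; nra).
  split.
  - replace (p ^ 4 + -4 * c * p ^ 3 + (4 * c ^ 2 - a) * p ^ 2 + 4 * a * c * p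
             + (-4 * a * c ^ 2 - b ^ 2 / 4))
      with ((p * (p * 1) - q * (q * 1) - a) * (p - 2 * c) ^ 2
            + (-(-2 * p * q + 4 * c * q - b) / 2) * (q * (p - 2 * c) - b / 2)) by field.
    rewrite E1, E2; field.
  - replace (4 * p ^ 3 + 3 * (-4 * c) * p ^ 2 + 2 * (4 * c ^ 2 - a) * p + 4 * a * c)
      with (- (p - 2 * c) * (2 * p * (-2 * p + 4 * c) - -2 * q * (-2 * q)) / 2
            + 2 * (p - 2 * c) * (p * (p * 1) - q * (q * 1) - a)) by field.
    rewrite E1, Rminus_diag, Rmult_0_r, Rplus_0_r.
    field; split; [exact J | exact Hp].
Qed.

Definition ell_axis_preimages (c a : R) : list (R * R) :=
  [(sqrt a, 0); (- sqrt a, 0);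
   (2 * c, sqrt (4 * c ^ 2 - a)); (2 * c, - sqrt (4 * c ^ 2 - a))].

Lemma ell_axis_preimages_cover (c a : R) (x : R * R) :
  eta_ell c x = (a, 0) -> In x (ell_axis_preimages c a).
Proof.
  destruct x as [p q]; simpl; intro E; injection E as E1 E2.
  assert (F : q * (4 * c - 2 * p) = 0) by (rewrite <- E2; ring).
  destruct (Rmult_integral _ _ F) as [-> | Hp].
  - assert (Ha : p ^ 2 = sqrt a ^ 2).
    { rewrite pow2_sqrt; [simpl; lra | rewrite <- E1; nra]. }
    destruct (sq_eq_cases _ _ Ha) as [-> | ->]; tauto.
  - replace p with (2 * c) in * by lra.
    assert (Hq : q ^ 2 = sqrt (4 * c ^ 2 - a) ^ 2).
    { rewrite pow2_sqrt; [simpl; lra | rewrite <- E1; nra]. }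
    destruct (sq_eq_cases _ _ Hq) as [-> | ->]; tauto.
Qed.

(* With r^2 + w^2 = 4c^2 the four Jacobians are 4r(2c-r), -4r(2c+r), -4w^2, -4w^2. *)
Lemma ell_axis_magnification_sum_rw (c r w : R) :
  w ^ 2 = 4 * c ^ 2 - r ^ 2 ->
  (forall x, In x [(r, 0); (- r, 0); (2 * c, w); (2 * c, - w)] -> jac_ell c x <> 0) ->
  fold_right Rplus 0 (map (magnification (jac_ell c))
                        [(r, 0); (- r, 0); (2 * c, w); (2 * c, - w)]) = 0.
Proof.
  intros Hrw J.
  assert (J1 := J _ (or_introl eq_refl)).
  assert (J3 := J _ (or_intror (or_intror (or_introl eq_refl)))).
  cbn [map fold_right] in *; unfold magnification; rewrite !jac_ell_eq in *.
  replace ((- w) ^ 2) with (w ^ 2) by ring; rewrite Hrw in *.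
  assert (Hr : r <> 0) by (intro Z; apply J1; rewrite Z; ring).
  assert (Hm : 2 * c - r <> 0) by (intro Z; apply J1; rewrite Z; ring).
  assert (Hp : 2 * c + r <> 0).
  { intro Z; apply J3.
    replace (4 * c ^ 2 - r ^ 2) with ((2 * c - r) * (2 * c + r)) by ring; rewrite Z; ring. }
  field; repeat split; intro; nra.
Qed.

Lemma ell_axis_magnification_sum (c a : R) :
  (forall x, In x (ell_axis_preimages c a) -> jac_ell c x <> 0) ->
  fold_right Rplus 0 (map (magnification (jac_ell c)) (ell_axis_preimages c a)) = 0.
Proof.
  intro J; apply ell_axis_magnification_sum_rw; [| exact J].
  assert (Hr : sqrt a <> 0).
  { intro Z; apply (J (sqrt a, 0)); [now left |].
    rewrite jac_ell_eq, Z; ring. }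
  assert (Hw : sqrt (4 * c ^ 2 - a) <> 0).
  { intro Z; apply (J (2 * c, sqrt (4 * c ^ 2 - a))); [right; right; now left |].
    rewrite jac_ell_eq, Z; ring. }
  rewrite (sqrt_pow2_of_neq0 _ Hr), (sqrt_pow2_of_neq0 _ Hw); ring.
Qed.

Lemma ell_magnification_sum (c : R) (y x1 x2 x3 x4 : R * R) :
  exactly_four_preimages (eta_ell c) y x1 x2 x3 x4 ->
  jac_ell c x1 <> 0 -> jac_ell c x2 <> 0 -> jac_ell c x3 <> 0 -> jac_ell c x4 <> 0 ->
  magnification (jac_ell c) x1 + magnification (jac_ell c) x2 +
  magnification (jac_ell c) x3 + magnification (jac_ell c) x4 = 0.
Proof.
  destruct y as [a b]; intros four J1 J2 J3 J4.
  destruct (Req_dec b 0) as [-> | Hb].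
  - assert (perm := preimages_Permutation _ _ _ _ _ _ four (ell_axis_preimages c a)
                      (le_n 4) (ell_axis_preimages_cover c a)).
    assert (J : forall x, In x (ell_axis_preimages c a) -> jac_ell c x <> 0).
    { intros x Hx; apply (Permutation_in _ (Permutation_sym perm)) in Hx.
      destruct Hx as [<- | [<- | [<- | [<- | []]]]]; assumption. }
    generalize (sum_map_Permutation (magnification (jac_ell c)) _ _ perm).
    rewrite (ell_axis_magnification_sum c a J); cbn [map fold_right]; lra.
  - apply (magnification_sum_of_quartic _ _ _ _ _ _ four _
             (-4 * c) (4 * c ^ 2 - a) (4 * a * c) (-4 * a * c ^ 2 - b ^ 2 / 4)
             (-1/2) c); try assumption.
    + intros x x'; now apply ell_first_coord_injective.
    + intros x; now apply ell_quartic_param.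
Qed.

Lemma hyp_first_coord_injective (c : R) (y x x' : R * R) :
  c <> 0 -> eta_hyp c x = y -> eta_hyp c x' = y -> fst x = fst x' -> x = x'.
Proof.
  destruct x as [p q], x' as [p' q']; simpl; intros Hc E E' <-.
  rewrite <- E' in E; injection E as E1 _.
  f_equal; apply (Rmult_eq_reg_l (2 * c)); lra.
Qed.

(* Eliminating q through 2 c q = a - p^2. *)
Lemma hyp_quartic_param (c a b : R) (x : R * R) :
  c <> 0 -> eta_hyp c x = (a, b) -> jac_hyp c x <> 0 ->
  quartic 0 (-2 * a) (8 * c ^ 3) (a ^ 2 - 4 * c ^ 2 * b) (fst x) = 0 /\
  magnification (jac_hyp c) x = (0 * fst x + -2 * c) / quartic' 0 (-2 * a) (8 * c ^ 3) (fst x).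
Proof.
  destruct x as [p q]; intros Hc E J; simpl in E; injection E as E1 E2.
  unfold magnification, jac_hyp, jac_det, det2, hyp_J11, hyp_J12, hyp_J21, hyp_J22,
    quartic, quartic' in *; cbn [fst snd] in *.
  split.
  - replace (p ^ 4 + 0 * p ^ 3 + -2 * a * p ^ 2 + 8 * c ^ 3 * p + (a ^ 2 - 4 * c ^ 2 * b))
      with ((p * (p * 1) - a - 2 * c * q) * (p * (p * 1) + 2 * c * q - a)
            + 4 * c ^ 2 * (q * (q * 1) + 2 * c * p - b)) by ring.
    rewrite E1, E2; ring.
  - replace (4 * p ^ 3 + 3 * 0 * p ^ 2 + 2 * (-2 * a) * p + 8 * c ^ 3)
      with (-2 * c * (2 * p * (2 * q) - 2 * c * (2 * c)) + 4 * p * (p * (p * 1) + 2 * c * q - a))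
      by ring.
    rewrite E1, Rminus_diag, Rmult_0_r, Rplus_0_r.
    field; split; [exact J | exact Hc].
Qed.

Definition hyp0_preimages (p q : R) : list (R * R) :=
  [(p, q); (- p, q); (p, - q); (- p, - q)].

Lemma hyp0_preimages_cover (p q : R) (x : R * R) :
  eta_hyp 0 x = eta_hyp 0 (p, q) -> In x (hyp0_preimages p q).
Proof.
  destruct x as [p' q']; simpl; intro E; injection E as E1 E2.
  assert (Hp : p' ^ 2 = p ^ 2) by (simpl; lra).
  assert (Hq : q' ^ 2 = q ^ 2) by (simpl; lra).
  destruct (sq_eq_cases _ _ Hp) as [-> | ->], (sq_eq_cases _ _ Hq) as [-> | ->]; tauto.
Qed.

Lemma jac_hyp0_eq (p q : R) : jac_hyp 0 (p, q) = 4 * p * q.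
Proof. unfold jac_hyp, jac_det, det2, hyp_J11, hyp_J12, hyp_J21, hyp_J22; simpl; ring. Qed.

Lemma hyp0_magnification_sum (p q : R) :
  fold_right Rplus 0 (map (magnification (jac_hyp 0)) (hyp0_preimages p q)) = 0.
Proof.
  cbn [hyp0_preimages map fold_right]; unfold magnification; rewrite !jac_hyp0_eq.
  replace (4 * - p * q) with (- (4 * p * q)) by ring.
  replace (4 * p * - q) with (- (4 * p * q)) by ring.
  replace (4 * - p * - q) with (4 * p * q) by ring.
  rewrite Rinv_opp; ring.
Qed.

Lemma hyp_magnification_sum (c : R) (y x1 x2 x3 x4 : R * R) :
  exactly_four_preimages (eta_hyp c) y x1 x2 x3 x4 ->
  jac_hyp c x1 <> 0 -> jac_hyp c x2 <> 0 -> jac_hyp c x3 <> 0 -> jac_hyp c x4 <> 0 ->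
  magnification (jac_hyp c) x1 + magnification (jac_hyp c) x2 +
  magnification (jac_hyp c) x3 + magnification (jac_hyp c) x4 = 0.
Proof.
  intros four J1 J2 J3 J4.
  destruct (Req_dec c 0) as [-> | Hc].
  - destruct x1 as [p q].
    assert (cover : forall x, eta_hyp 0 x = y -> In x (hyp0_preimages p q)).
    { intros x Ex; apply hyp0_preimages_cover; rewrite Ex.
      destruct four as (_ & _ & _ & _ & _ & _ & E1 & _); exact (eq_sym E1). }
    generalize (sum_map_Permutation (magnification (jac_hyp 0)) _ _
                  (preimages_Permutation _ _ _ _ _ _ four (hyp0_preimages p q) (le_n 4) cover)).
    rewrite hyp0_magnification_sum; cbn [map fold_right]; lra.
  - destruct y as [a b].
    apply (magnification_sum_of_quartic _ _ _ _ _ _ four _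
             0 (-2 * a) (8 * c ^ 3) (a ^ 2 - 4 * c ^ 2 * b) 0 (-2 * c)); try assumption.
    + intros x x'; now apply hyp_first_coord_injective.
    + intros x; now apply hyp_quartic_param.
Qed.

Theorem theorem8p1 (c : R) :
  (forall y x1 x2 x3 x4 : R * R,
     exactly_four_preimages (eta_ell c) y x1 x2 x3 x4 ->
     jac_ell c x1 <> 0 -> jac_ell c x2 <> 0 ->
     jac_ell c x3 <> 0 -> jac_ell c x4 <> 0 ->
     magnification (jac_ell c) x1 + magnification (jac_ell c) x2 +
     magnification (jac_ell c) x3 + magnification (jac_ell c) x4 = 0)
  /\
  (forall y x1 x2 x3 x4 : R * R,
     exactly_four_preimages (eta_hyp c) y x1 x2 x3 x4 ->
     jac_hyp c x1 <> 0 -> jac_hyp c x2 <> 0 ->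
     jac_hyp c x3 <> 0 -> jac_hyp c x4 <> 0 ->
     magnification (jac_hyp c) x1 + magnification (jac_hyp c) x2 +
     magnification (jac_hyp c) x3 + magnification (jac_hyp c) x4 = 0).
Proof.
  split; intros y x1 x2 x3 x4.
  - apply ell_magnification_sum.
  - apply hyp_magnification_sum.
Qed.
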